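(* Let $p$ be an odd prime and $\mathbb O$ Zorn's split octonion algebra over $\mathbb Q_p$. The lattice $\Lambda[0,1,-1,0,-1,1,0,0]$, i.e. the set of $\begin{pmatrix}x&(y_1,y_2,y_3)\\ (z_1,z_2,z_3)&w\end{pmatrix}$ with $x,w,y_3,z_3\in\mathbb Z_p$, $y_1,z_2\in p\mathbb Z_p$, $y_2,z_1\in p^{-1}\mathbb Z_p$, is a maximal order in $\mathbb O$.
   Context: Zorn's split octonion algebra $\mathbb O$ over a field $k$ is the set of formal matrices $\begin{pmatrix}a&\vec v\\ \vec w&d\end{pmatrix}$ with $a,d\in k$, $\vec v,\vec w\in k^3$, with entrywise addition and multiplication $\begin{pmatrix}a&\vec v\\ \vec w&d\end{pmatrix}\begin{pmatrix}\alpha&\vec\phi\\ \vec\psi&\delta\end{pmatrix}=\begin{pmatrix}a\alpha+\vec v\cdot\vec\psi & a\vec\phi+\delta\vec v-\vec w\times\vec\psi\\ \alpha\vec w+d\vec\psi+\vec v\times\vec\phi & d\delta+\vec w\cdot\vec\phi\end{pmatrix}$ (standard dot and cross products). For integers $a_1,\dots,a_8$, $\Lambda[a_1,\dots,a_8]$ is the set of $\begin{pmatrix}x&(y_1,y_2,y_3)\\ (z_1,z_2,z_3)&w\end{pmatrix}$ with $x\in p^{a_1}\mathbb Z_p$, $y_i\in p^{a_{i+1}}\mathbb Z_p$, $z_i\in p^{a_{i+4}}\mathbb Z_p$, $w\in p^{a_8}\mathbb Z_p$. A lattice is a finitely generated $\mathbb Z_p$-submodule spanning $\mathbb O$ over $\mathbb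 Q_p$; an order is a lattice that contains $\mathbf 1$ and is closed under multiplication; a maximal order is an order not properly contained in any other order. *)

From HB Require Import structures.
From mathcomp Require Import all_boot all_order all_algebra.
Set Implicit Arguments. Unset Strict Implicit. Unset Printing Implicit Defensive.
Import Order.TTheory GRing.Theory Num.Theory.
Local Open Scope ring_scope.

Section Padic.
Variables (p : nat) (K : fieldType) (v : K -> int).

(* x lies in p^a Z_p  (0 has valuation +infinity) *)
Definition inpZ (a : int) (x : K) : Prop := x = 0 \/ a <= v x.

Definition padic_field : Prop :=
  [/\ (forall x y : K, x != 0 -> y != 0 -> v (x * y) = v x + v y),
      (forall x y : K, x != 0 -> y != 0 -> x + y != 0 ->
          Num.min (v x) (v y) <= v (x + y)),
      (p%:R : K) != 0 /\ v p%:R = 1,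
      (forall n : nat, (0 < n)%N -> (n%:R : K) != 0) /\
      (forall x : K, inpZ 0 x -> exists n : nat, inpZ 1 (x - n%:R)) &
      (forall u : nat -> K,
          (forall N : int, exists M : nat, forall m n : nat,
              (M <= m)%N -> (M <= n)%N -> inpZ N (u m - u n)) ->
          exists l : K, forall N : int, exists M : nat, forall m : nat,
              (M <= m)%N -> inpZ N (u m - l))].
End Padic.

(* Zorn's vector-matrix (split octonion) algebra over K *)
Record oct (K : Type) := Oct { oa : K; ov : K * K * K; ow : K * K * K; od : K }.

Section Octonions.
Variable K : fieldType.

Definition v3add (x y : K * K * K) : K * K * K :=
  let: (x1, x2, x3) := x in let: (y1, y2, y3) := y in (x1 + y1, x2 + y2, x3 + y3).
Definition v3scale (c : K) (x : K * K * K) : K * K * K :=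
  let: (x1, x2, x3) := x in (c * x1, c * x2, c * x3).
Definition v3dot (x y : K * K * K) : K :=
  let: (x1, x2, x3) := x in let: (y1, y2, y3) := y in x1 * y1 + x2 * y2 + x3 * y3.
Definition v3cross (x y : K * K * K) : K * K * K :=
  let: (x1, x2, x3) := x in let: (y1, y2, y3) := y in
  (x2 * y3 - x3 * y2, x3 * y1 - x1 * y3, x1 * y2 - x2 * y1).

Definition oct_add (X Y : oct K) : oct K :=
  Oct (oa X + oa Y) (v3add (ov X) (ov Y)) (v3add (ow X) (ow Y)) (od X + od Y).
Definition oct_scale (c : K) (X : oct K) : oct K :=
  Oct (c * oa X) (v3scale c (ov X)) (v3scale c (ow X)) (c * od X).
Definition oct0 : oct K := Oct 0 (0, 0, 0) (0, 0, 0) 0.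
Definition oct1 : oct K := Oct 1 (0, 0, 0) (0, 0, 0) 1.

Definition oct_mul (X Y : oct K) : oct K :=
  Oct (oa X * oa Y + v3dot (ov X) (ow Y))
      (v3add (v3add (v3scale (oa X) (ov Y)) (v3scale (od Y) (ov X)))
             (v3scale (-1) (v3cross (ow X) (ow Y))))
      (v3add (v3add (v3scale (oa Y) (ow X)) (v3scale (od X) (ow Y)))
             (v3cross (ov X) (ov Y)))
      (od X * od Y + v3dot (ow X) (ov Y)).

Fixpoint lincomb (cs : seq K) (gs : seq (oct K)) : oct K :=
  match cs, gs with
  | c :: cs', g :: gs' => oct_add (oct_scale c g) (lincomb cs' gs')
  | _, _ => oct0
  end.

Variable v : K -> int.

(* finitely generated Z_p-submodule spanning O over Q_p *)
Definition is_lattice (L : oct K -> Prop) : Prop :=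
  (exists gs : seq (oct K), forall x : oct K,
      L x <-> exists cs : seq K, size cs = size gs /\
              (forall c, c \in cs -> inpZ v 0 c) /\ x = lincomb cs gs) /\
  (forall x : oct K, exists (cs : seq K) (gs : seq (oct K)),
      (forall i : nat, (i < size gs)%N -> L (nth oct0 gs i)) /\ x = lincomb cs gs).

Definition is_order (L : oct K -> Prop) : Prop :=
  is_lattice L /\ L oct1 /\ (forall x y, L x -> L y -> L (oct_mul x y)).

Definition is_maximal_order (L : oct K -> Prop) : Prop :=
  is_order L /\
  (forall M : oct K -> Prop, is_order M -> (forall x, L x -> M x) ->
     forall x, M x -> L x).

Definition Lambda (a1 a2 a3 a4 a5 a6 a7 a8 : int) (X : oct K) : Prop :=
  let: (y1, y2, y3) := ov X in let: (z1, z2, z3) := ow X in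
  inpZ v a1 (oa X) /\ inpZ v a2 y1 /\ inpZ v a3 y2 /\ inpZ v a4 y3 /\
  inpZ v a5 z1 /\ inpZ v a6 z2 /\ inpZ v a7 z3 /\ inpZ v a8 (od X).
End Octonions.

(* Q_p is given abstractly by [padic_field p v].

   With e1 = diag(1, 0) and e2 = diag(0, 1), the products e1 X e1, e2 X e2,
   ((e1 X) e2) W and ((e2 X) e1) V extract the diagonal entries of X and the
   pairings of its vector entries with those of W (lower corner) and V (upper
   corner), as scalars placed on the diagonal.  In an order, a diagonal scalar
   diag(c, 0) generates powers whose coordinates stay bounded below (orders are
   lattices), so c is integral.  Hence every X in an order M containing e1, e2
   has integral diagonal entries and integral pairings with the off-diagonal
   elements of M.  The lattice Lambda = Lambda[0,1,-1,0,-1,1,0,0] is an order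
   and is self-dual for these pairings, so any order containing Lambda lies in
   Lambda. *)
From HB Require Import structures.
From mathcomp Require Import all_boot all_order all_algebra.
From mathcomp Require Import zify ring.
Import Order.TTheory GRing.Theory Num.Theory.
Set Implicit Arguments. Unset Strict Implicit. Unset Printing Implicit Defensive.
Local Open Scope ring_scope.

Lemma forall_in_cons (T : eqType) (P : T -> Prop) (x : T) (s : seq T) :
  (forall c, c \in x :: s -> P c) <-> P x /\ (forall c, c \in s -> P c).
Proof.
split=> [Ps | [Px Ps] c]; last by rewrite inE => /orP [/eqP -> | /Ps].
by split=> [|c cs]; apply: Ps; rewrite inE ?eqxx ?cs ?orbT.
Qed.

Section Coordinates.
Variable K : fieldType.

Definition oct_coord (i : nat) (X : oct K) : K :=
  match i with
  | 0 => oa X | 1 => (ov X).1.1 | 2 => (ov X).1.2 | 3 => (ov X).2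
  | 4 => (ow X).1.1 | 5 => (ow X).1.2 | 6 => (ow X).2 | _ => od X
  end.

Lemma oct_coord_add i (X Y : oct K) :
  oct_coord i (oct_add X Y) = oct_coord i X + oct_coord i Y.
Proof.
case: X Y => a [[? ?] ?] [[? ?] ?] ? [a' [[? ?] ?] [[? ?] ?] ?].
by case: i => [|[|[|[|[|[|[|]]]]]]].
Qed.

Lemma oct_coord_scale i c (X : oct K) : oct_coord i (oct_scale c X) = c * oct_coord i X.
Proof.
case: X => a [[? ?] ?] [[? ?] ?] ?.
by case: i => [|[|[|[|[|[|[|]]]]]]].
Qed.

Lemma oct_coord0 i : oct_coord i (oct0 K) = 0.
Proof. by case: i => [|[|[|[|[|[|[|]]]]]]]. Qed.

Lemma oct_coord_lincomb i c cs g gs :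
  oct_coord i (lincomb (c :: cs) (g :: gs)) = c * oct_coord i g + oct_coord i (lincomb cs gs).
Proof. by rewrite /= oct_coord_add oct_coord_scale. Qed.

Lemma oct_ext (X Y : oct K) : (forall i, (i < 8)%N -> oct_coord i X = oct_coord i Y) -> X = Y.
Proof.
case: X Y => a [[y1 y2] y3] [[z1 z2] z3] d [a' [[y1' y2'] y3'] [[z1' z2'] z3'] d'] eqXY.
by move: (eqXY 0%N) (eqXY 1%N) (eqXY 2%N) (eqXY 3%N) (eqXY 4%N) (eqXY 5%N)
  (eqXY 6%N) (eqXY 7%N) => /= -> // -> // -> // -> // -> // -> // -> // -> //.
Qed.

Definition scaled_basis (s1 s2 s3 s4 s5 s6 s7 s8 : K) : seq (oct K) :=
  [:: Oct s1 (0, 0, 0) (0, 0, 0) 0; Oct 0 (s2, 0, 0) (0, 0, 0) 0;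
      Oct 0 (0, s3, 0) (0, 0, 0) 0; Oct 0 (0, 0, s4) (0, 0, 0) 0;
      Oct 0 (0, 0, 0) (s5, 0, 0) 0; Oct 0 (0, 0, 0) (0, s6, 0) 0;
      Oct 0 (0, 0, 0) (0, 0, s7) 0; Oct 0 (0, 0, 0) (0, 0, 0) s8].

Lemma lincomb_scaled_basis c1 c2 c3 c4 c5 c6 c7 c8 s1 s2 s3 s4 s5 s6 s7 s8 :
  lincomb [:: c1; c2; c3; c4; c5; c6; c7; c8] (scaled_basis s1 s2 s3 s4 s5 s6 s7 s8) =
  Oct (c1 * s1) (c2 * s2, c3 * s3, c4 * s4) (c5 * s5, c6 * s6, c7 * s7) (c8 * s8).
Proof.
apply: oct_ext => i ilt8; rewrite /scaled_basis !oct_coord_lincomb /= oct_coord0.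
by case: i ilt8 => [|[|[|[|[|[|[|[|]]]]]]]] //= _; rewrite !(mulr0, mulr1, addr0, add0r).
Qed.

Definition diag1 (c : K) : oct K := Oct c (0, 0, 0) (0, 0, 0) 0.
Definition diag2 (c : K) : oct K := Oct 0 (0, 0, 0) (0, 0, 0) c.

Ltac oct_ring := apply: oct_ext; case=> [|[|[|[|[|[|[|[|]]]]]]]] //= _; ring.

Lemma diag1_mul c c' : oct_mul (diag1 c) (diag1 c') = diag1 (c * c').
Proof. oct_ring. Qed.

Lemma diag2_mul c c' : oct_mul (diag2 c) (diag2 c') = diag2 (c * c').
Proof. oct_ring. Qed.

Lemma sandwich_diag1 X : oct_mul (oct_mul (diag1 1) X) (diag1 1) = diag1 (oa X).
Proof. case: X => a [[? ?] ?] [[? ?] ?] d; oct_ring. Qed.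

Lemma sandwich_diag2 X : oct_mul (oct_mul (diag2 1) X) (diag2 1) = diag2 (od X).
Proof. case: X => a [[? ?] ?] [[? ?] ?] d; oct_ring. Qed.

Lemma sandwich_ov X w :
  oct_mul (oct_mul (oct_mul (diag1 1) X) (diag2 1)) (Oct 0 (0, 0, 0) w 0) =
  diag1 (v3dot (ov X) w).
Proof. case: X w => a [[? ?] ?] [[? ?] ?] d [[? ?] ?]; oct_ring. Qed.

Lemma sandwich_ow X u :
  oct_mul (oct_mul (oct_mul (diag2 1) X) (diag1 1)) (Oct 0 u (0, 0, 0) 0) =
  diag2 (v3dot (ow X) u).
Proof. case: X u => a [[? ?] ?] [[? ?] ?] d [[? ?] ?]; oct_ring. Qed.

End Coordinates.

Section PadicOrders.
Variables (p : nat) (K : fieldType) (v : K -> int).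
Hypothesis hp : padic_field p v.

Lemma v_mul (x y : K) : x != 0 -> y != 0 -> v (x * y) = v x + v y.
Proof. by case: hp => vM _ _ _ _; exact: vM. Qed.

Lemma v1 : v 1 = 0.
Proof. by have := @v_mul 1 1 (oner_neq0 _) (oner_neq0 _); rewrite mulr1; lia. Qed.

Lemma v_inv (x : K) : x != 0 -> v x^-1 = - v x.
Proof.
move=> x0; have := v_mul x0 (invr_neq0 x0); rewrite mulfV // v1; lia.
Qed.

Lemma vN1 : v (-1) = 0.
Proof.
have n1 : (-1 : K) != 0 by rewrite oppr_eq0 oner_neq0.
by have := v_mul n1 n1; rewrite mulrNN mulr1 v1; lia.
Qed.

Lemma v_expz (x : K) (z : int) : x != 0 -> v (x ^ z) = v x * z.
Proof.
move=> x0; have v_exp n : v (x ^+ n) = v x *+ n.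
  elim: n => [|n IH]; first by rewrite expr0 v1.
  by rewrite exprS v_mul ?expf_neq0 // IH mulrS.
case: z => n /=; first by rewrite v_exp; lia.
by rewrite v_inv ?expf_neq0 // v_exp; lia.
Qed.

Lemma inpZ0 (a : int) : inpZ v a 0.
Proof. by left. Qed.

Lemma inpZ_le (a b : int) (x : K) : b <= a -> inpZ v a x -> inpZ v b x.
Proof. by move=> ba [->|ax]; [left | right; exact: le_trans ax]. Qed.

Lemma inpZ_add (a : int) (x y : K) : inpZ v a x -> inpZ v a y -> inpZ v a (x + y).
Proof.
case: hp => _ vD _ _ _ [->|ax]; first by rewrite add0r.
case=> [->|ay]; first by rewrite addr0; right.
have [->|x0] := eqVneq x 0; first by rewrite add0r; right.
have [->|y0] := eqVneq y 0; first by rewrite addr0; right.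
have [->|s0] := eqVneq (x + y) 0; first by left.
by right; apply: le_trans (vD _ _ x0 y0 s0); rewrite le_min ax ay.
Qed.

Lemma inpZ_mul (a b c : int) (x y : K) :
  inpZ v a x -> inpZ v b y -> c <= a + b -> inpZ v c (x * y).
Proof.
case=> [->|ax]; first by rewrite mul0r; left.
case=> [->|ay]; first by rewrite mulr0; left.
have [->|x0] := eqVneq x 0; first by rewrite mul0r; left.
have [->|y0] := eqVneq y 0; first by rewrite mulr0; left.
by right; rewrite v_mul //; lia.
Qed.

Lemma inpZ_opp (a : int) (x : K) : inpZ v a x -> inpZ v a (- x).
Proof.
move=> ax; rewrite -mulN1r; apply: inpZ_mul ax _ => //; first by right; rewrite vN1.
by rewrite add0r.
Qed.

Lemma inpZ_unscale (b : int) (x c : K) : c != 0 -> inpZ v b (x * c) -> inpZ v (b - v c) x.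
Proof.
move=> c0 [/eqP|xc]; first by rewrite mulf_eq0 (negPf c0) orbF => /eqP ->; left.
have [->|x0] := eqVneq x 0; first by left.
by right; move: xc; rewrite v_mul //; lia.
Qed.

Lemma char_neq0 : (p%:R : K) != 0.
Proof. by case: hp => _ _ []. Qed.

Lemma v_char : v p%:R = 1.
Proof. by case: hp => _ _ []. Qed.

Local Notation q := (p%:R : K).

Lemma v_pow (a : int) : v (q ^ a) = a.
Proof. by rewrite v_expz ?char_neq0 // v_char mul1r. Qed.

Lemma pow_neq0 (a : int) : q ^ a != 0.
Proof. exact: expfz_neq0 char_neq0. Qed.

Lemma inpZ_coeff (a : int) (x : K) : inpZ v a x -> inpZ v 0 (x * (q ^ a)^-1).
Proof.
move=> ax; apply: (inpZ_mul (b := - a)) ax _ _; first by right; rewrite v_inv ?pow_neq0 // v_pow.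
by rewrite subrr.
Qed.

Lemma inpZ_scaled (a : int) (c : K) : inpZ v 0 c -> inpZ v a (c * q ^ a).
Proof. by move=> c0; apply: (inpZ_mul (b := a)) c0 _ _; [right; rewrite v_pow | rewrite add0r]. Qed.

(* Every Lambda[a1, ..., a8] is a lattice, with basis q^(a_i) times the coordinate basis. *)
Lemma Lambda_lattice (a1 a2 a3 a4 a5 a6 a7 a8 : int) :
  is_lattice v (Lambda v a1 a2 a3 a4 a5 a6 a7 a8).
Proof.
set gs := scaled_basis (q ^ a1) (q ^ a2) (q ^ a3) (q ^ a4) (q ^ a5) (q ^ a6) (q ^ a7) (q ^ a8).
pose coeffs (X : oct K) : seq K :=
  let: Oct a (y1, y2, y3) (z1, z2, z3) d := X in
  [:: a * (q ^ a1)^-1; y1 * (q ^ a2)^-1; y2 * (q ^ a3)^-1; y3 * (q ^ a4)^-1;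
      z1 * (q ^ a5)^-1; z2 * (q ^ a6)^-1; z3 * (q ^ a7)^-1; d * (q ^ a8)^-1].
have decomp X : X = lincomb (coeffs X) gs.
  by case: X => a [[? ?] ?] [[? ?] ?] d; rewrite lincomb_scaled_basis !mulfVK ?pow_neq0.
split.
  exists gs => X; split.
    move=> LX; exists (coeffs X); split; last split; last exact: decomp.
    - by case: X {LX} => a [[? ?] ?] [[? ?] ?] d.
    - case: X LX => a [[? ?] ?] [[? ?] ?] d /= [? [? [? [? [? [? [? ?]]]]]]].
      by do 8 (apply/forall_in_cons; split; first exact: inpZ_coeff).
  case=> cs [size_cs [cs_int ->]]; move: cs size_cs cs_int.
  case=> [|c1 [|c2 [|c3 [|c4 [|c5 [|c6 [|c7 [|c8 [|]]]]]]]]] // _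
    /forall_in_cons[? /forall_in_cons[? /forall_in_cons[? /forall_in_cons[?
    /forall_in_cons[? /forall_in_cons[? /forall_in_cons[? /forall_in_cons[? _]]]]]]]].
  by rewrite lincomb_scaled_basis /=; do !split; exact: inpZ_scaled.
move=> X; exists (coeffs X), gs; split; last exact: decomp.
have pow_int (a : int) : inpZ v a (q ^ a) by right; rewrite v_pow.
by case=> [|[|[|[|[|[|[|[|]]]]]]]] //= _; do !split; exact: pow_int || exact: inpZ0.
Qed.

Lemma lincomb_coord_bounded (i : nat) (gs : seq (oct K)) :
  exists B : int, forall cs, (forall c, c \in cs -> inpZ v 0 c) ->
    inpZ v B (oct_coord i (lincomb cs gs)).
Proof.
elim: gs => [|g gs [B IH]]; first by exists 0 => -[|c cs] _; rewrite /= oct_coord0; left.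
exists (Num.min B (v (oct_coord i g))) => -[|c cs]; first by rewrite /= oct_coord0; left.
case/forall_in_cons => c_int cs_int; rewrite oct_coord_lincomb; apply: inpZ_add.
  by apply: (inpZ_mul (b := v (oct_coord i g))) c_int _ _; [right | rewrite add0r ge_min lexx orbT].
by apply: inpZ_le (IH _ cs_int); rewrite ge_min lexx.
Qed.

Lemma lattice_coord_bounded (L : oct K -> Prop) (i : nat) :
  is_lattice v L -> exists B : int, forall X, L X -> inpZ v B (oct_coord i X).
Proof.
case=> -[gs Lgs] _; have [B bound] := lincomb_coord_bounded i gs.
by exists B => X /Lgs [cs [_ [cs_int ->]]]; exact: bound.
Qed.

(* If c |-> F c embeds K multiplicatively into the octonions, with c recovered as a
   coordinate, then F c can lie in an order only for integral c: its powers stay in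
   the order, whose coordinates are bounded below, while v(c^n) = n v(c). *)
Lemma order_embedded_integral (M : oct K -> Prop) (F : K -> oct K) (i : nat) (c : K) :
  is_order v M -> (forall x y, oct_mul (F x) (F y) = F (x * y)) ->
  (forall x, oct_coord i (F x) = x) -> M (F c) -> inpZ v 0 c.
Proof.
move=> [latM [_ mulM]] F_mul F_coord Mc.
have [B bound] := lattice_coord_bounded i latM.
have Mpow n : M (F (c ^+ n.+1)).
  by elim: n => [|n IH]; rewrite ?expr1 // exprS -F_mul; exact: mulM.
have [->|c0] := eqVneq c 0; first exact: inpZ0.
right; rewrite leNgt; apply/negP => vc_neg.
have := bound _ (Mpow `|B|%N); rewrite F_coord.
case=> [/eqP|]; first by rewrite expf_eq0 (negPf c0) andbF.
rewrite exprnP v_expz //; nia.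
Qed.

Lemma order_diag1_integral (M : oct K -> Prop) (c : K) :
  is_order v M -> M (diag1 c) -> inpZ v 0 c.
Proof. by move=> ordM; apply: (order_embedded_integral (i := 0) ordM) => //; exact: diag1_mul. Qed.

Lemma order_diag2_integral (M : oct K -> Prop) (c : K) :
  is_order v M -> M (diag2 c) -> inpZ v 0 c.
Proof. by move=> ordM; apply: (order_embedded_integral (i := 7) ordM) => //; exact: diag2_mul. Qed.

Lemma order_oa_integral (M : oct K -> Prop) (X : oct K) :
  is_order v M -> M (diag1 1) -> M X -> inpZ v 0 (oa X).
Proof.
move=> ordM M1 MX; have mulM := ordM.2.2.
by apply: (order_diag1_integral ordM); rewrite -sandwich_diag1; apply: mulM (mulM _ _ M1 MX) M1.
Qed.

Lemma order_od_integral (M : oct K -> Prop) (X : oct K) :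
  is_order v M -> M (diag2 1) -> M X -> inpZ v 0 (od X).
Proof.
move=> ordM M2 MX; have mulM := ordM.2.2.
by apply: (order_diag2_integral ordM); rewrite -sandwich_diag2; apply: mulM (mulM _ _ M2 MX) M2.
Qed.

Lemma order_ov_integral (M : oct K -> Prop) (X : oct K) (w : K * K * K) :
  is_order v M -> M (diag1 1) -> M (diag2 1) -> M (Oct 0 (0, 0, 0) w 0) -> M X ->
  inpZ v 0 (v3dot (ov X) w).
Proof.
move=> ordM M1 M2 Mw MX; have mulM := ordM.2.2.
apply: (order_diag1_integral ordM); rewrite -sandwich_ov.
by apply: (mulM _ _ _ Mw); apply: (mulM _ _ _ M2); exact: mulM M1 MX.
Qed.

Lemma order_ow_integral (M : oct K -> Prop) (X : oct K) (u : K * K * K) :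
  is_order v M -> M (diag1 1) -> M (diag2 1) -> M (Oct 0 u (0, 0, 0) 0) -> M X ->
  inpZ v 0 (v3dot (ow X) u).
Proof.
move=> ordM M1 M2 Mu MX; have mulM := ordM.2.2.
apply: (order_diag2_integral ordM); rewrite -sandwich_ow.
by apply: (mulM _ _ _ Mu); apply: (mulM _ _ _ M1); exact: mulM M2 MX.
Qed.

Local Notation Lambda0 := (Lambda v 0 1 (-1) 0 (-1) 1 0 0).

Ltac inpZ_close :=
  match goal with
  | |- inpZ _ _ (_ + _) => apply: inpZ_add; inpZ_close
  | |- inpZ _ _ (- _) => apply: inpZ_opp; inpZ_close
  | |- inpZ _ _ (_ * _) => apply: inpZ_mul; [eassumption | eassumption | done]
  | _ => eassumption
  end.

Ltac Lambda_member := by do !split; first [exact: inpZ0 | assumption].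

(* Lambda0 is closed under multiplication: the exponents satisfy a_i + a_j >= a_k
   for every entry product occurring in the multiplication table. *)
Lemma Lambda0_mul (X Y : oct K) : Lambda0 X -> Lambda0 Y -> Lambda0 (oct_mul X Y).
Proof.
case: X Y => a [[y1 y2] y3] [[z1 z2] z3] d [a' [[y1' y2'] y3'] [[z1' z2'] z3'] d'].
rewrite /Lambda /= !mulN1r => -[? [? [? [? [? [? [? ?]]]]]]] [? [? [? [? [? [? [? ?]]]]]]].
by do !split; inpZ_close.
Qed.

Lemma Lambda0_diag : Lambda0 (diag1 1) /\ Lambda0 (diag2 1).
Proof. by split; rewrite /Lambda /=; do !split; try exact: inpZ0; right; rewrite v1. Qed.

Lemma Lambda0_order : is_order v Lambda0.
Proof.
split; first exact: Lambda_lattice.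
split; last exact: Lambda0_mul.
by rewrite /Lambda /=; do !split; try exact: inpZ0; right; rewrite v1.
Qed.

(* It suffices
   to pair with the six scaled basis vectors (0 (q^-1,0,0); ...) of Lambda0. *)
Lemma Lambda0_dual (X : oct K) :
  inpZ v 0 (oa X) -> inpZ v 0 (od X) ->
  (forall w, Lambda0 (Oct 0 (0, 0, 0) w 0) -> inpZ v 0 (v3dot (ov X) w)) ->
  (forall u, Lambda0 (Oct 0 u (0, 0, 0) 0) -> inpZ v 0 (v3dot (ow X) u)) ->
  Lambda0 X.
Proof.
case: X => a [[y1 y2] y3] [[z1 z2] z3] d /= a_int d_int dual_y dual_z.
have [q0 vq] := (char_neq0, v_char).
have qi0 : q^-1 != 0 by rewrite invr_eq0.
have vqi : v q^-1 = -1 by rewrite v_inv // vq.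
have intq : inpZ v 1 q by right; rewrite vq.
have intqi : inpZ v (-1) q^-1 by right; rewrite vqi.
have int1 : inpZ v 0 1 by right; rewrite v1.
have unscale_q x : inpZ v 0 (x * q) -> inpZ v (-1) x.
  by move/(inpZ_unscale q0); rewrite vq sub0r.
have unscale_qi x : inpZ v 0 (x / q) -> inpZ v 1 x.
  by move/(inpZ_unscale qi0); rewrite vqi sub0r opprK.
move: (dual_y (q^-1, 0, 0)) (dual_y (0, q, 0)) (dual_y (0, 0, 1)).
move: (dual_z (q, 0, 0)) (dual_z (0, q^-1, 0)) (dual_z (0, 0, 1)).
rewrite /Lambda /= !(mulr0, mulr1, addr0, add0r).
move=> /(_ ltac:(Lambda_member)) /unscale_q z1_int /(_ ltac:(Lambda_member)) /unscale_qi z2_int.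
move=> /(_ ltac:(Lambda_member)) z3_int /(_ ltac:(Lambda_member)) /unscale_qi y1_int.
move=> /(_ ltac:(Lambda_member)) /unscale_q y2_int /(_ ltac:(Lambda_member)) y3_int.
by do !split.
Qed.

End PadicOrders.

(* An order M containing Lambda0 contains e1, e2 and the off-diagonal elements of
   Lambda0, so each of its elements is in Lambda0 by integrality and self-duality. *)
Theorem mainTheorem14 (p : nat) (K : fieldType) (v : K -> int) :
  prime p -> odd p -> padic_field p v ->
  is_maximal_order v (Lambda v 0 1 (-1) 0 (-1) 1 0 0).
Proof.
move=> _ _ hp; split=> [|M ordM LM X MX]; first exact: Lambda0_order hp.
have [/LM M1 /LM M2] := Lambda0_diag hp.
apply: (Lambda0_dual hp).
- exact: (order_oa_integral hp ordM M1 MX).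
- exact: (order_od_integral hp ordM M2 MX).
- by move=> w /LM Mw; exact: (order_ov_integral hp ordM M1 M2 Mw MX).
- by move=> u /LM Mu; exact: (order_ow_integral hp ordM M1 M2 Mu MX).
Qed.
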